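(* Let $T$ be a completely non-unitary contraction on a separable infinite-dimensional complex Hilbert space $\mathcal{H}$ which is not an isometry, and suppose $\mathcal{D}_T\subseteq\mathcal{D}_{T^*}$ and $\dim\mathcal{D}_{T^*}<\infty$. Then $T$ is analytic if and only if $T$ has no non-zero eigenvalue.
   Context: For a contraction $T$ on $\mathcal{H}$, $\mathcal{D}_T=\overline{(I-T^*T)^{1/2}\mathcal{H}}$ and $\mathcal{D}_{T^*}=\overline{(I-TT^* )^{1/2}\mathcal{H}}$. A contraction is completely non-unitary if it has no nonzero reducing subspace on which it is unitary. $T$ is analytic if $\bigcap_{m\ge1}T^m\mathcal{H}=\{0\}$. *)

From mathcomp Require Import all_boot all_order all_algebra.
From mathcomp Require Import reals complex.
Set Implicit Arguments. Unset Strict Implicit. Unset Printing Implicit Defensive.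
Import Order.TTheory GRing.Theory Num.Theory.
Local Open Scope ring_scope.
Local Open Scope complex_scope.

Section Hilbert.
Variables (R : realType) (H : lmodType R[i]) (ip : H -> H -> R[i]).

Definition nrm2 (x : H) : R[i] := ip x x.

Definition cauchy_seq (u : nat -> H) : Prop :=
  forall e : R[i], 0 < e -> exists N : nat, forall m n : nat,
    (N <= m)%N -> (N <= n)%N -> nrm2 (u m - u n) < e.

Definition seq_converges (u : nat -> H) (l : H) : Prop :=
  forall e : R[i], 0 < e -> exists N : nat, forall n : nat,
    (N <= n)%N -> nrm2 (u n - l) < e.

Record hs_hilbert : Prop := {
  ip_addl : forall x y z, ip (x + y) z = ip x z + ip y z;
  ip_scalel : forall (a : R[i]) x y, ip (a *: x) y = a * ip x y;
  ip_conj : forall x y, ip y x = (ip x y)^*;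
  ip_ge0 : forall x, 0 <= ip x x;
  ip_def : forall x, ip x x = 0 -> x = 0;
  ip_complete : forall u, cauchy_seq u -> exists l, seq_converges u l }.

Definition in_span (s : seq H) (x : H) : Prop :=
  exists c : nat -> R[i], x = \sum_(k < size s) c k *: s`_k.

Definition hs_separable : Prop :=
  exists u : nat -> H, forall y e, 0 < e -> exists n, nrm2 (u n - y) < e.

Definition hs_infinite_dim : Prop :=
  ~ exists s : seq H, forall x, in_span s x.

Definition hs_finite_dim (M : H -> Prop) : Prop :=
  exists s : seq H, forall x, M x -> in_span s x.

Definition bounded_linear (T : H -> H) : Prop :=
  (forall (a : R[i]) x y, T (a *: x + y) = a *: T x + T y) /\
  exists K : R[i], forall x, nrm2 (T x) <= K * nrm2 x.

Definition is_adjoint (T Ts : H -> H) : Prop :=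
  forall x y, ip (T x) y = ip x (Ts y).

Definition hs_contraction (T : H -> H) : Prop :=
  bounded_linear T /\ forall x, nrm2 (T x) <= nrm2 x.

Definition hs_isometry (T : H -> H) : Prop := forall x, nrm2 (T x) = nrm2 x.

Definition positive_op (S : H -> H) : Prop :=
  bounded_linear S /\ is_adjoint S S /\ forall x, 0 <= ip (S x) x.

Definition is_pos_sqrt (S A : H -> H) : Prop :=
  positive_op S /\ forall x, S (S x) = A x.

Definition closure_range (S : H -> H) (y : H) : Prop :=
  forall e : R[i], 0 < e -> exists x, nrm2 (S x - y) < e.

Definition closed_subspace (M : H -> Prop) : Prop :=
  [/\ M 0, (forall x y, M x -> M y -> M (x + y)),
      (forall (a : R[i]) x, M x -> M (a *: x)) &
      (forall u l, (forall n, M (u n)) -> seq_converges u l -> M l)].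

Definition reducing (T Ts : H -> H) (M : H -> Prop) : Prop :=
  closed_subspace M /\ (forall x, M x -> M (T x)) /\ (forall x, M x -> M (Ts x)).

Definition unitary_on (T : H -> H) (M : H -> Prop) : Prop :=
  (forall x, M x -> nrm2 (T x) = nrm2 x) /\
  (forall y, M y -> exists x, M x /\ T x = y).

Definition completely_non_unitary (T Ts : H -> H) : Prop :=
  forall M : H -> Prop, reducing T Ts M -> unitary_on T M -> forall x, M x -> x = 0.

Definition analytic (T : H -> H) : Prop :=
  forall x, (forall m : nat, (1 <= m)%N -> exists y, x = iter m T y) -> x = 0.

Definition has_nonzero_eigenvalue (T : H -> H) : Prop :=
  exists lam : R[i], lam != 0 /\ exists x, x != 0 /\ T x = lam *: x.

End Hilbert.

(* Let N := ker D_{T*}, the orthogonal complement of the defect space D_{T*}.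
   Because D_T is contained in D_{T*}, both T*T and TT* are the identity on N,
   so T maps N isometrically into itself and the intersection of the T^j N is
   a reducing subspace on which T is unitary; complete non-unitarity makes it
   {0}.  As N has codimension n := dim D_{T*}, every y admits a nonzero
   polynomial p of degree at most n with p(T) y in N.  Writing p = X^k q with
   q(0) <> 0, a Bezout identity between X^m and q shows that T^m y in N forces
   T^n y in N, hence every vector of N lying in all the ranges T^m H lies in
   every T^j N.  If x = T^(n+1) y <> 0 lies in all ranges, q(T) x is such a
   vector, so q(T) x = 0 and one of the linear factors T - z (z <> 0) of q(T)
   has a nonzero kernel.  Conversely, an eigenvector v for an eigenvalue
   lam <> 0 equals T^m (lam^-m v) for every m. *)

From mathcomp Require Import all_boot all_order all_algebra.
From mathcomp Require Import reals complex.
From mathcomp Require Import ring.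
From Stdlib Require Import ClassicalEpsilon.
Import Order.TTheory GRing.Theory Num.Theory.
Local Open Scope ring_scope.
Local Open Scope complex_scope.
Set Implicit Arguments. Unset Strict Implicit. Unset Printing Implicit Defensive.

Section LinearMaps.
Variables (K : pzRingType) (V : lmodType K).

Section OneMap.
Variables (f : V -> V) (hf : linear f).

Lemma lin0 : f 0 = 0.
Proof.
have := hf 1 0 0; rewrite scaler0 add0r scale1r => h.
by apply: (@addrI _ (f 0)); rewrite addr0 -{1}h.
Qed.

Lemma linD x y : f (x + y) = f x + f y.
Proof. by have := hf 1 x y; rewrite !scale1r. Qed.

Lemma linZ a x : f (a *: x) = a *: f x.
Proof. by have := hf a x 0; rewrite !addr0 lin0 addr0. Qed.

Lemma linB x y : f (x - y) = f x - f y.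
Proof. by rewrite linD -scaleN1r linZ scaleN1r. Qed.

Lemma lin_sum m (F : 'I_m -> V) : f (\sum_(i < m) F i) = \sum_(i < m) f (F i).
Proof. exact: (big_morph f linD lin0). Qed.

End OneMap.

Lemma lin_iter (f : V -> V) j : linear f -> linear (iter j f).
Proof. by move=> hf; elim: j => [|j IH] a x y //=; rewrite IH hf. Qed.

End LinearMaps.

Lemma iter_stable (V : Type) (P : V -> Prop) (f : V -> V) j x :
  (forall y, P y -> P (f y)) -> P x -> P (iter j f x).
Proof. by move=> hf; elim: j => //= j IH /IH; apply: hf. Qed.

Definition iterated_image (V : Type) (T : V -> V) (N : V -> Prop) (x : V) : Prop :=
  forall j, exists2 a, N a & x = iter j T a.

Definition in_all_ranges (V : Type) (T : V -> V) (x : V) : Prop :=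
  forall m, (1 <= m)%N -> exists y, x = iter m T y.

Section InnerProduct.
Variables (R : realType) (H : lmodType R[i]) (ip : H -> H -> R[i]).
Hypothesis hH : hs_hilbert ip.

Lemma ip_addr x y z : ip x (y + z) = ip x y + ip x z.
Proof. by rewrite (ip_conj hH) (ip_addl hH) rmorphD /= -!(ip_conj hH). Qed.

Lemma ip_scaler a x y : ip x (a *: y) = conjc a * ip x y.
Proof. by rewrite (ip_conj hH) (ip_scalel hH) rmorphM /= -(ip_conj hH). Qed.

Lemma ip0l y : ip 0 y = 0.
Proof. by rewrite -(scale0r (0 : H)) (ip_scalel hH) mul0r. Qed.

Lemma ip0r y : ip y 0 = 0.
Proof. by rewrite (ip_conj hH) ip0l conjc0. Qed.

Lemma ip_oppl x y : ip (- x) y = - ip x y.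
Proof. by rewrite -scaleN1r (ip_scalel hH) mulN1r. Qed.

Lemma ip_oppr x y : ip x (- y) = - ip x y.
Proof. by rewrite (ip_conj hH) ip_oppl rmorphN /= -(ip_conj hH). Qed.

Lemma ip_subr x y z : ip x (y - z) = ip x y - ip x z.
Proof. by rewrite ip_addr ip_oppr. Qed.

Lemma ip_suml m (F : 'I_m -> H) y : ip (\sum_(k < m) F k) y = \sum_(k < m) ip (F k) y.
Proof. exact: (big_morph (ip^~ y) (fun a b => ip_addl hH a b y) (ip0l y)). Qed.

Lemma ip_span0 (s : seq H) x y :
  (forall i, (i < size s)%N -> ip x s`_i = 0) -> in_span s y -> ip x y = 0.
Proof.
move=> hs [c ->]; rewrite (big_morph (ip x) (ip_addr x) (ip0r x)).
by apply: big1 => k _; rewrite ip_scaler hs ?mulr0.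
Qed.

Lemma closure_range_self (S : H -> H) z : closure_range ip S (S z).
Proof. by move=> e he; exists z; rewrite subrr /nrm2 ip0l. Qed.

Lemma nrm2_subC x y : nrm2 ip (x - y) = nrm2 ip (y - x).
Proof. by rewrite /nrm2 -opprB ip_oppl ip_oppr opprK. Qed.

Lemma nrm2_small_eq0 d : (forall e : R[i], 0 < e -> nrm2 ip d < e) -> d = 0.
Proof.
move=> h; apply: (ip_def hH); have [//|hne] := eqVneq (ip d d) 0.
have hp : 0 < ip d d by rewrite lt_def hne (ip_ge0 hH).
by have := h _ hp; rewrite /nrm2 ltxx.
Qed.

Lemma nrm2_add_lt x y (e : R[i]) :
  nrm2 ip x < e / 4%:R -> nrm2 ip y < e / 4%:R -> nrm2 ip (x + y) < e.
Proof.
move=> hx hy.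
have parallelogram : nrm2 ip (x + y) + nrm2 ip (x - y)
    = 2%:R * nrm2 ip x + 2%:R * nrm2 ip y.
  by rewrite /nrm2 !(ip_addl hH, ip_addr, ip_oppl, ip_oppr); ring.
apply: (@le_lt_trans _ _ (2%:R * nrm2 ip x + 2%:R * nrm2 ip y)).
  by rewrite -parallelogram lerDl (ip_ge0 hH).
have -> : e = 2%:R * (e / 4%:R) + 2%:R * (e / 4%:R) by field.
by rewrite ltrD // ltr_pM2l // ltr0n.
Qed.

Lemma seq_converges_cauchy u l : seq_converges ip u l -> cauchy_seq ip u.
Proof.
move=> hl e he; have [K hK] : exists K, forall n, (K <= n)%N -> nrm2 ip (u n - l) < e / 4%:R.
  by apply: hl; rewrite divr_gt0 // ltr0n.
exists K => m n hm hn; have -> : u m - u n = (u m - l) + (l - u n) by rewrite addrA subrK.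
by apply: nrm2_add_lt; [apply: hK | rewrite nrm2_subC; apply: hK].
Qed.

Lemma cauchy_schwarz a w : ip a w * ip w a <= nrm2 ip a * nrm2 ip w.
Proof.
have [->|na0] := eqVneq a 0; first by rewrite /nrm2 !ip0l ip0r !mul0r.
have aa0 : ip a a != 0 by apply: contra_neq na0; apply: (ip_def hH).
have aapos : 0 < ip a a by rewrite lt_def aa0 (ip_ge0 hH).
set t := ip w a / ip a a.
have tJ : conjc t = ip a w / ip a a.
  by rewrite /t rmorphM /= conjc_inv -!(ip_conj hH).
have := mulr_ge0 (ltW aapos) (ip_ge0 hH (w - t *: a)).
suff -> : ip a a * ip (w - t *: a) (w - t *: a) = ip a a * ip w w - ip a w * ip w a.
  by rewrite subr_ge0.
rewrite !(ip_addl hH, ip_oppl, ip_scalel hH, ip_subr, ip_scaler) tJ /t.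
by field.
Qed.

(* Cauchy-Schwarz for [c - b] gives [|<c, w>|^2 <= ||c - b||^2 ||w||^2]. *)
Lemma ip_closure0 c w :
  (forall e : R[i], 0 < e -> exists b, nrm2 ip (b - c) < e /\ ip b w = 0) -> ip c w = 0.
Proof.
move=> h; have [//|a0] := eqVneq (ip c w) 0.
have w0 : w != 0 by apply: contra_neq a0 => ->; rewrite ip0r.
have ww0 : ip w w != 0 by apply: contra_neq w0; apply: (ip_def hH).
have wwp : 0 < ip w w by rewrite lt_def ww0 (ip_ge0 hH).
have ep : 0 < ip c w * conjc (ip c w) / ip w w.
  by rewrite divr_gt0 // lt_def mulf_neq0 ?conjc_eq0 // mulcJ_ge0.
have [b [hb1 hb2]] := h _ ep.
have cs := cauchy_schwarz (c - b) w.
rewrite [ip w _](ip_conj hH) (ip_addl hH) ip_oppl hb2 subr0 /nrm2 in cs.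
have : ip (c - b) (c - b) * ip w w < ip c w * conjc (ip c w).
  by rewrite -[X in _ < X](divfK ww0) ltr_pM2r // -[ip _ _]/(nrm2 ip _) nrm2_subC.
by move=> /(le_lt_trans cs); rewrite ltxx.
Qed.

Lemma ker_orth_closure_range (S : H -> H) x k :
  is_adjoint ip S S -> S x = 0 -> closure_range ip S k -> ip k x = 0.
Proof.
move=> hS hx hk; apply: ip_closure0 => e he.
have [z hz] := hk e he; exists (S z); split => //.
by rewrite hS hx ip0r.
Qed.

Lemma self_adjoint_ker_closed (S : H -> H) u l :
  is_adjoint ip S S -> (forall k, S (u k) = 0) -> seq_converges ip u l -> S l = 0.
Proof.
move=> hS hu hl; apply: (ip_def hH); rewrite hS; apply: ip_closure0 => e he.
have [K hK] := hl e he; exists (u K); split; first exact: hK.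
by rewrite -hS hu ip0l.
Qed.

End InnerProduct.

Section UnitaryPart.
Variables (R : realType) (H : lmodType R[i]) (ip : H -> H -> R[i]).
Variables (T Ts : H -> H) (N : H -> Prop).
Hypotheses (hH : hs_hilbert ip) (hC : hs_contraction ip T) (hA : is_adjoint ip T Ts).
Hypotheses (hN : closed_subspace ip N) (NT : forall x, N x -> N (T x)).
Hypotheses (TsT : forall x, N x -> Ts (T x) = x) (TTs : forall x, N x -> T (Ts x) = x).

Local Notation M := (iterated_image T N).

Let linT : linear T. Proof. by case: hC => [[]]. Qed.

Lemma nrm2_iter_le j x : nrm2 ip (iter j T x) <= nrm2 ip x.
Proof. by elim: j => //= j IH; apply: le_trans IH; case: hC. Qed.

Lemma nrm2_iter_N j x : N x -> nrm2 ip (iter j T x) = nrm2 ip x.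
Proof.
elim: j => //= j IH hx; rewrite /nrm2 hA TsT; first exact: IH.
exact: iter_stable.
Qed.

Lemma iterated_image_N x : M x -> N x.
Proof. by case/(_ 0%N) => a ha ->. Qed.

(* [T^j] is isometric on [N], so preimages in [N] of a Cauchy sequence are Cauchy. *)
Lemma iterated_image_lim u l : (forall k, M (u k)) -> seq_converges ip u l -> M l.
Proof.
case: hN => _ ND NZ Nlim hu hl j.
have linTj := lin_iter j linT.
have [a ha] : exists a, forall k, N (a k) /\ u k = iter j T (a k).
  apply: (choice (fun k b => N b /\ u k = iter j T b)) => k.
  by have [a Na ->] := hu k j; exists a.
have [a0 ha0] : exists a0, seq_converges ip a a0.
  apply: (ip_complete hH) => e he; have [K hK] := seq_converges_cauchy hH hl he.
  exists K => m k hm hk; have [Nm um] := ha m; have [Nk uk] := ha k.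
  have Nmk : N (a m - a k) by rewrite -scaleN1r; apply/ND/NZ.
  by rewrite -(nrm2_iter_N j Nmk) (linB linTj) -um -uk; apply: hK.
exists a0; first by apply: Nlim ha0 => k; case: (ha k).
apply: subr0_eq; apply: (nrm2_small_eq0 hH) => e he.
have e4 : 0 < e / 4%:R by rewrite divr_gt0 // ltr0n.
have [K1 hK1] := hl _ e4; have [K2 hK2] := ha0 _ e4.
have [_ uk] := ha (maxn K1 K2).
have -> : l - iter j T a0 = (l - u (maxn K1 K2)) + iter j T (a (maxn K1 K2) - a0).
  by rewrite (linB linTj) -uk addrA subrK.
apply: (nrm2_add_lt hH); first by rewrite (nrm2_subC hH); apply: hK1; rewrite leq_maxl.
by apply: le_lt_trans (nrm2_iter_le _ _) _; apply: hK2; rewrite leq_maxr.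
Qed.

Lemma iterated_image_closed : closed_subspace ip M.
Proof.
have [N0 ND NZ _] := hN; split; last exact: iterated_image_lim.
- by move=> j; exists 0; rewrite // (lin0 (lin_iter j linT)).
- move=> x y hx hy j; have [a ha ->] := hx j; have [b hb ->] := hy j.
  by exists (a + b); [exact: ND | rewrite (linD (lin_iter j linT))].
- move=> c x hx j; have [a ha ->] := hx j.
  by exists (c *: a); [exact: NZ | rewrite (linZ (lin_iter j linT))].
Qed.

Lemma iterated_image_T x : M x -> M (T x).
Proof.
move=> hx j; have [a ha ->] := hx j.
by exists (T a); [exact: NT | rewrite -iterSr].
Qed.

Lemma iterated_image_Ts x : M x -> M (Ts x).
Proof.
move=> hx j; have [a ha ->] := hx j.+1.
by exists a; rewrite //= TsT //; apply: iter_stable.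
Qed.

Lemma iterated_image_eq0 : completely_non_unitary ip T Ts -> forall x, M x -> x = 0.
Proof.
move=> hcnu; apply: (hcnu M).
  split; first exact: iterated_image_closed.
  by split; [exact: iterated_image_T | exact: iterated_image_Ts].
split=> y hy; first by rewrite /nrm2 hA TsT //; exact: iterated_image_N.
by exists (Ts y); split; [exact: iterated_image_Ts | apply/TTs/iterated_image_N].
Qed.

End UnitaryPart.

Section DefectKernel.
Variables (R : realType) (H : lmodType R[i]) (ip : H -> H -> R[i]).
Variables (T Ts DT DTs : H -> H).
Hypothesis hH : hs_hilbert ip.
Hypotheses (hDT : is_pos_sqrt ip DT (fun x => x - Ts (T x)))
           (hDTs : is_pos_sqrt ip DTs (fun x => x - T (Ts x))).

Let linDT : linear DT. Proof. by case: hDT => [[[]]]. Qed.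
Let linDTs : linear DTs. Proof. by case: hDTs => [[[]]]. Qed.
Let adjDT : is_adjoint ip DT DT. Proof. by case: hDT => [[_ []]]. Qed.
Let adjDTs : is_adjoint ip DTs DTs. Proof. by case: hDTs => [[_ []]]. Qed.
Let sqDT x : DT (DT x) = x - Ts (T x). Proof. by case: hDT => _ ->. Qed.
Let sqDTs x : DTs (DTs x) = x - T (Ts x). Proof. by case: hDTs => _ ->. Qed.

Lemma defect_ker_TTs x : DTs x = 0 <-> T (Ts x) = x.
Proof.
split=> hx; last by apply: (ip_def hH); rewrite adjDTs sqDTs hx subrr (ip0r hH).
by have := sqDTs x; rewrite hx (lin0 linDTs) => /esym/subr0_eq/esym.
Qed.

Lemma defect_ker_closed : closed_subspace ip (fun x => DTs x = 0).
Proof.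
split=> [|x y hx hy|a x hx|]; first exact: lin0.
- by rewrite (linD linDTs) hx hy addr0.
- by rewrite (linZ linDTs) hx scaler0.
- by move=> u l; apply: (self_adjoint_ker_closed hH adjDTs).
Qed.

Lemma defect_ker_orth_span (s : seq H) :
  (forall x, closure_range ip DTs x -> in_span s x) ->
  forall x, (forall i, (i < size s)%N -> ip x s`_i = 0) -> DTs x = 0.
Proof.
move=> hs x hx; apply: (ip_def hH); rewrite adjDTs.
exact/(ip_span0 hH hx)/hs/closure_range_self.
Qed.

Hypothesis hsub : forall x, closure_range ip DT x -> closure_range ip DTs x.

Lemma defect_ker_TsT x : DTs x = 0 -> Ts (T x) = x.
Proof.
(* [x] is orthogonal to the closure of the range of [DTs], which contains that of [DT]. *)
move=> hx; have DTx : DT x = 0.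
  apply: (ip_def hH); rewrite adjDT (ip_conj hH).
  by rewrite (ker_orth_closure_range hH adjDTs hx) ?conjc0 //; apply/hsub/closure_range_self.
by have := sqDT x; rewrite DTx (lin0 linDT) => /esym/subr0_eq/esym.
Qed.

Lemma defect_ker_T x : DTs x = 0 -> DTs (T x) = 0.
Proof. by move=> hx; apply/defect_ker_TTs; rewrite defect_ker_TsT. Qed.

End DefectKernel.

Section PolynomialOfOperator.
Variables (K : comNzRingType) (V : lmodType K) (T : V -> V).
Hypothesis linT : linear T.

Definition poly_op (p : {poly K}) (y : V) : V := \sum_(i < size p) p`_i *: iter i T y.

Lemma poly_op_widen (p : {poly K}) y m : (size p <= m)%N ->
  poly_op p y = \sum_(i < m) p`_i *: iter i T y.
Proof.
elim: m => [|m IH]; first by rewrite leqn0 /poly_op => /eqP ->.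
rewrite leq_eqVlt => /orP [/eqP <- // | hs].
by rewrite big_ord_recr /= -IH // nth_default // scale0r addr0.
Qed.

Lemma poly_op0 y : poly_op 0 y = 0.
Proof. by rewrite /poly_op size_poly0 big_ord0. Qed.

Lemma poly_opD (p q : {poly K}) y : poly_op (p + q) y = poly_op p y + poly_op q y.
Proof.
set m := maxn (size p) (size q).
rewrite (@poly_op_widen (p + q) y m) ?size_polyD //.
rewrite (@poly_op_widen p y m) ?leq_maxl // (@poly_op_widen q y m) ?leq_maxr //.
by rewrite -big_split /=; apply: eq_bigr => i _; rewrite coefD scalerDl.
Qed.

Lemma poly_opCM c (q : {poly K}) y : poly_op (c%:P * q) y = c *: poly_op q y.
Proof.
rewrite mul_polyC (@poly_op_widen (c *: q) y (size q)) ?size_scale_leq //.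
rewrite /poly_op scaler_sumr; apply: eq_bigr => i _.
by rewrite coefZ scalerA.
Qed.

Lemma poly_opXM (q : {poly K}) y : poly_op ('X * q) y = T (poly_op q y).
Proof.
have hs : (size ('X * q)%R <= (size q).+1)%N.
  by apply: leq_trans (size_polyMleq _ _) _; rewrite size_polyX.
rewrite (poly_op_widen y hs) big_ord_recl coefXM /= scale0r add0r.
rewrite /poly_op (lin_sum linT); apply: eq_bigr => i _.
by rewrite coefXM /= (linZ linT).
Qed.

Lemma poly_op_comm (p : {poly K}) y : poly_op p (T y) = T (poly_op p y).
Proof.
rewrite /poly_op (lin_sum linT); apply: eq_bigr => i _.
by rewrite (linZ linT) -iterSr.
Qed.

Lemma poly_op1 y : poly_op 1 y = y.
Proof. by rewrite /poly_op size_poly1 big_ord1 coef1 /= scale1r. Qed.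

Lemma poly_opC c y : poly_op c%:P y = c *: y.
Proof. by rewrite -[c%:P]mulr1 poly_opCM poly_op1. Qed.

Lemma poly_opX y : poly_op 'X y = T y.
Proof. by rewrite -['X]mulr1 poly_opXM poly_op1. Qed.

Lemma poly_opM (p q : {poly K}) y : poly_op (p * q) y = poly_op p (poly_op q y).
Proof.
elim/poly_ind: p q y => [|p c IH] q y; first by rewrite mul0r !poly_op0.
rewrite mulrDl -mulrA poly_opD IH poly_opXM poly_opCM.
by rewrite poly_opD mulrC poly_opXM poly_opC poly_op_comm.
Qed.

Lemma poly_opXn m y : poly_op 'X^m y = iter m T y.
Proof.
elim: m => [|m IH]; first by rewrite expr0 poly_op1.
by rewrite exprS poly_opXM IH.
Qed.

Lemma poly_op_iter (p : {poly K}) j y : poly_op p (iter j T y) = iter j T (poly_op p y).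
Proof. by rewrite -!poly_opXn -!poly_opM mulrC. Qed.

Lemma poly_op_stable (P : V -> Prop) :
  P 0 -> (forall x y, P x -> P y -> P (x + y)) ->
  (forall a x, P x -> P (a *: x)) -> (forall x, P x -> P (T x)) ->
  forall (p : {poly K}) y, P y -> P (poly_op p y).
Proof.
move=> P0 PD PZ PT p y Py; apply: (big_ind P) => // i _.
by apply: PZ; apply: iter_stable.
Qed.

Lemma in_all_ranges_poly_op (p : {poly K}) x :
  in_all_ranges T x -> in_all_ranges T (poly_op p x).
Proof.
apply: poly_op_stable => [m _ | a b ha hb m hm | c a ha m hm | a ha m hm].
- by exists 0; rewrite (lin0 (lin_iter m linT)).
- have [ya ->] := ha m hm; have [yb ->] := hb m hm.
  by exists (ya + yb); rewrite (linD (lin_iter m linT)).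
- have [ya ->] := ha m hm.
  by exists (c *: ya); rewrite (linZ (lin_iter m linT)).
- by have [ya ->] := ha m hm; exists (T ya); rewrite -iterSr.
Qed.

Lemma eigenvalue_of_prod_XsubC (r : seq K) x :
  x != 0 -> (forall z, z \in r -> z != 0) ->
  poly_op (\prod_(z <- r) ('X - z%:P)) x = 0 ->
  exists lam : K, lam != 0 /\ exists v, v != 0 /\ T v = lam *: v.
Proof.
elim: r => [|z r IH] hx hr; first by rewrite big_nil poly_op1 => x0; rewrite x0 eqxx in hx.
rewrite big_cons poly_opM; set w := poly_op _ x.
have [w0|wn0] := eqVneq w 0.
  by move=> _; apply: IH => // u hu; apply: hr; rewrite inE hu orbT.
rewrite poly_opD poly_opX -polyCN poly_opC scaleNr => /eqP; rewrite subr_eq0 => /eqP hw.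
by exists z; split; [apply: hr; rewrite inE eqxx | exists w].
Qed.

End PolynomialOfOperator.

Lemma eigenvalue_of_annihilator (K : closedFieldType) (V : lmodType K) (T : V -> V)
    (q : {poly K}) x :
  linear T -> ~~ root q 0 -> x != 0 -> poly_op T q x = 0 ->
  exists lam : K, lam != 0 /\ exists v, v != 0 /\ T v = lam *: v.
Proof.
move=> linT hq0 hx; have [r hr] := closed_field_poly_normal q.
have lc0 : lead_coef q != 0.
  by rewrite lead_coef_eq0; apply: contraNneq hq0 => ->; rewrite root0.
rewrite hr -mul_polyC poly_opCM => /eqP; rewrite scaler_eq0 (negPf lc0) /= => /eqP.
apply: eigenvalue_of_prod_XsubC => // z hz; apply: contraNneq hq0 => z0.
by rewrite hr rootZ // root_prod_XsubC -z0.
Qed.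

Lemma analytic_no_nonzero_eigenvalue (R : realType) (V : lmodType R[i]) (T : V -> V) :
  linear T -> analytic T -> ~ has_nonzero_eigenvalue T.
Proof.
move=> linT hT [lam [lam0 [v [v0 hv]]]].
have iter_v m : iter m T v = lam ^+ m *: v.
  elim: m => [|m IH] /=; first by rewrite expr0 scale1r.
  by rewrite IH (linZ linT) hv scalerA exprS mulrC.
apply: (negP v0); apply/eqP; apply: hT => m _; exists (lam ^- m *: v).
by rewrite (linZ (lin_iter m linT)) iter_v scalerA mulVf ?scale1r // expf_neq0.
Qed.

Lemma exists_annihilator (R : realType) (H : lmodType R[i]) (ip : H -> H -> R[i])
    (T : H -> H) (s : seq H) (N : H -> Prop) :
  hs_hilbert ip -> (forall x, (forall i, (i < size s)%N -> ip x s`_i = 0) -> N x) ->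
  forall y, exists p : {poly R[i]},
    [/\ p != 0, (size p <= (size s).+1)%N & N (poly_op T p y)].
Proof.
move=> hH hN y.
(* The coefficients of [p] form a nonzero vector in the left kernel of the
   [(size s + 1) x size s] matrix of the [<T^j y, s_i>]. *)
pose A : 'M[R[i]]_((size s).+1, size s) := \matrix_(j, i) ip (iter j T y) s`_i.
have [v /sub_kermxP vA v0] : exists2 v : 'rV_(size s).+1, (v <= kermx A)%MS & v != 0.
  apply/rowV0Pn; rewrite kermx_eq0 /row_free.
  by apply: contraTneq (rank_leq_col A) => ->; rewrite ltnn.
pose p := \poly_(j < (size s).+1) v 0 (inord j).
have coef_p (j : 'I_(size s).+1) : p`_j = v 0 j by rewrite coef_poly ltn_ord inord_val.
exists p; split.
- have /rV0Pn [j vj] := v0; apply: contra_neq vj => p0.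
  by rewrite -coef_p p0 coef0.
- exact: size_poly.
apply: hN => i hi; rewrite (poly_op_widen T y (size_poly _ _)) (ip_suml hH).
have := congr1 (fun B : 'M_(1, size s) => B 0 (Ordinal hi)) vA; rewrite !mxE; apply: etrans.
by apply: eq_bigr => j _; rewrite (ip_scalel hH) coef_p mxE.
Qed.

Section FiniteCodimension.
Variables (R : realType) (V : lmodType R[i]) (T : V -> V) (N : V -> Prop) (n : nat).
Hypothesis linT : linear T.
Hypotheses (N0 : N 0) (ND : forall x y, N x -> N y -> N (x + y)).
Hypotheses (NZ : forall a x, N x -> N (a *: x)) (NT : forall x, N x -> N (T x)).
Hypothesis annihilator : forall y, exists p : {poly R[i]},
  [/\ p != 0, (size p <= n.+1)%N & N (poly_op T p y)].

Lemma annihilator_coprimeX y : exists k (q : {poly R[i]}),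
  [/\ (k <= n)%N, ~~ root q 0 & N (poly_op T q (iter k T y))].
Proof.
have [p [p0 hsp hNp]] := annihilator y.
have [k [q hq0 hpq]] := multiplicity_XsubC p 0.
rewrite p0 /= in hq0; rewrite polyC0 subr0 in hpq.
have q0 : q != 0 by apply: contraNneq p0 => q0; rewrite hpq q0 mul0r.
exists k, q; split => //.
  move: hsp; rewrite hpq size_mulXn // => hsp; rewrite -ltnS (leq_trans _ hsp) //.
  by rewrite -{1}(addn0 k) ltn_add2l size_poly_gt0.
by rewrite -(poly_opXn linT) -(poly_opM linT) -hpq.
Qed.

(* Bezout: [X^m] and [q] are coprime, so some [u X^m + v q] is a nonzero constant. *)
Lemma mem_coprimeX (q : {poly R[i]}) m w :
  ~~ root q 0 -> N (iter m T w) -> N (poly_op T q w) -> N w.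
Proof.
move=> hq hm hqw.
have /Bezout_coprimepP [[u v] /= huv] : coprimep 'X^m q.
  by apply: coprimep_expl; rewrite coprimep_sym coprimepX.
have /eqpP [[c1 c2] /= /andP [c10 c20] hc] := huv.
have : N (poly_op T (u * 'X^m + v * q) w).
  rewrite poly_opD !(poly_opM linT) (poly_opXn linT).
  by apply: ND; apply: poly_op_stable.
move=> /(NZ c1); rewrite -poly_opCM mul_polyC hc -mul_polyC poly_opCM poly_op1.
by move=> /(NZ c2^-1); rewrite scalerA mulVf // scale1r.
Qed.

Lemma iter_mem y m : N (iter m T y) -> N (iter n T y).
Proof.
move=> hm; have [k [q [hk hq hNq]]] := annihilator_coprimeX y.
have hw : N (iter k T y).
  apply: (mem_coprimeX (m := m) hq) => //.
  by rewrite -iterD addnC iterD; apply: iter_stable.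
by rewrite -(subnK hk) iterD; apply: iter_stable.
Qed.

Lemma in_all_ranges_iterated_image x : in_all_ranges T x -> N x -> iterated_image T N x.
Proof.
move=> hx hN [|j]; first by exists x.
have [y hy] := hx (n + j.+1)%N (ltn_addl _ (ltn0Sn j)).
exists (iter n T y); last by rewrite hy addnC iterD.
by apply: (@iter_mem y (n + j.+1)); rewrite -hy.
Qed.

Lemma no_eigenvalue_analytic :
  (forall x, iterated_image T N x -> x = 0) -> ~ has_nonzero_eigenvalue T -> analytic T.
Proof.
move=> hM hne x hx; have [//|x0] := eqVneq x 0; exfalso; apply: hne.
have [y hy] := hx n.+1 isT.
have [k [q [hk hq hNq]]] := annihilator_coprimeX y.
have hqx : poly_op T q x = 0.
  apply: hM; apply: in_all_ranges_iterated_image; first exact: in_all_ranges_poly_op.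
  by rewrite hy -(subnK (leqW hk)) iterD (poly_op_iter linT); apply: iter_stable.
exact: (eigenvalue_of_annihilator linT hq x0 hqx).
Qed.

End FiniteCodimension.

Theorem corollary4p4 (R : realType) (H : lmodType R[i]) (ip : H -> H -> R[i])
    (T Ts DT DTs : H -> H) :
  hs_hilbert ip -> hs_separable ip -> hs_infinite_dim H ->
  hs_contraction ip T -> is_adjoint ip T Ts ->
  is_pos_sqrt ip DT (fun x => x - Ts (T x)) ->
  is_pos_sqrt ip DTs (fun x => x - T (Ts x)) ->
  completely_non_unitary ip T Ts ->
  ~ hs_isometry ip T ->
  (forall x, closure_range ip DT x -> closure_range ip DTs x) ->
  hs_finite_dim (closure_range ip DTs) ->
  (analytic T <-> ~ has_nonzero_eigenvalue T).
Proof.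
move=> hH _ _ hC hA hDT hDTs hcnu _ hsub [s hs].
have linT : linear T by case: hC => [[]].
have hN := defect_ker_closed hH hDTs; have [N0 ND NZ _] := hN.
have NT := defect_ker_T hH hDT hDTs hsub.
split; first exact: analytic_no_nonzero_eigenvalue.
apply: (no_eigenvalue_analytic (n := size s) linT N0 ND NZ NT).
  exact: (exists_annihilator T hH (defect_ker_orth_span hH hDTs hs)).
apply: (iterated_image_eq0 hH hC hA hN NT _ _ hcnu).
  exact: (defect_ker_TsT hH hDT hDTs hsub).
by move=> x /(defect_ker_TTs hH hDTs).
Qed.
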